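(* Let $S$ be a memory system satisfying the Causality and Data Independence assumptions, let $n,m\ge1$, let $\Omega$ be the simple witness for $S(n,m)$, and let $1\le k\le\min\{n,m\}$. Then there is an unambiguous trace $\tau$ of $S(n,m)$ such that $G(\Omega)(\tau)$ has a canonical $k$-nice cycle if and only if there is a trace $\tau'$ of $S(n,m,2)$ such that $\tau'\in Constrain_k(j)$ for all $1\le j\le m$ and $\tau'\in Check_k(i)$ for all $1\le i\le k$.
   Context: Notation: $\mathbb{N}_n=\{1,\dots,n\}$, $\mathbb{W}_n=\{0,\dots,n\}$, $\mathbb{W}=\{0,1,2,\dots\}$. Memory events $E(n,m,v)=\{R,W\}\times\mathbb{N}_n\times\mathbb{N}_m\times\mathbb{W}_v$; for $e=\langle a,b,c,d\rangle$, $op(e)=a$, $proc(e)=b$, $loc(e)=c$, $data(e)=d$; $0$ models the initial value of every location. A memory system is a family $S=(S(n,m,v))_{n,m,v\ge1}$, $S(n,m,v)$ a regular set of finite runs over an alphabet $E^a(n,m,v)\supseteq E(n,m,v)$ (other letters are internal events); $S(n,m)=\bigcup_{v\ge1}S(n,m,v)$. The trace of a run is its subsequence of memory events; traces of $S(n,m,v)$ (resp. $S(n,m)$) are traces of its runs. For a sequence $\tau$ of memory events with positions $1,\dots,|\tau|$: $P(\tau,i)=\{k: proc(\tau(k))=i\}$, $L(\tau,j)=\{k: loc(\tau(k))=j\}$, $L^w(\tau,j)$, $L^r(\tau,j)$ the write/read positions in $L(\tau,j)$, $M(\tau,i)=\{\langle u,v\rangle: u,v\in P(\tau,i), u<v\}$.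 $\tau$ is unambiguous if for every $j$ and $x\in L^w(\tau,j)$, $data(\tau(x))\ne0$ and $data(\tau(x))\ne data(\tau(y))$ for all $y\in L^w(\tau,j)\setminus\{x\}$. Causality: for all $n,m,v$, every trace $\tau$ of $S(n,m,v)$, every $j$ and $x\in L^r(\tau,j)$, either $data(\tau(x))=0$ or some $y\in L^w(\tau,j)$ has $data(\tau(y))=data(\tau(x))$. Data Independence: with renaming functions $\lambda:\mathbb{N}_m\times\mathbb{W}\to\mathbb{W}$, $\lambda(j,0)=0$, and $\lambda^d(\langle a,b,c,d\rangle)=\langle a,b,c,\lambda(c,d)\rangle$ letterwise, for all $n,m,v$ and $\tau\in E(n,m,v)^*$: $\tau$ is a trace of $S(n,m,v)$ iff $\tau=\lambda^d(\tau')$ for some unambiguous trace $\tau'$ of $S(n,m)$ and renaming function $\lambda$ with values in $\mathbb{W}_v$. The simple witness $\Omega$ assigns to each trace $\tau$ and location $j$ the order $\Omega(\tau,j)=\{\langle x,y\rangle: x,y\in L^w(\tau,j), x<y\}$. For unambiguous $\tau$: $\langle x,y\rangle\in\Omega^e(\tau,j)$ (for $x,y\in L(\tau,j)$) iff (1) $data(\tau(x))=data(\tau(y))$, $op(\tau(x))=W$, $op(\tau(y))=R$; or (2) $data(\tau(x))=0\ne data(\tau(y))$; or (3) some $a,b\in L^w(\tau,j)$ have $\langle a,b\rangle\in\Omega(\tau,j)$, $data(\tau(a))=data(\tau(x))$, $data(\tau(b))=data(\tau(y))$. $G(\Omega)(\tau)$ is the directed graph on $\{1,\dots,|\tau|\}$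 with edges $\bigcup_iM(\tau,i)\cup\bigcup_j\Omega^e(\tau,j)$. With $x\oplus1=x+1$ for $x<k$ and $k\oplus1=1$, a canonical $k$-nice cycle in $G(\Omega)(\tau)$ is a sequence $u_1,v_1,\dots,u_k,v_k$ of pairwise distinct vertices with $\langle u_x,v_x\rangle\in M(\tau,x)$ and $\langle v_x,u_{x\oplus1}\rangle\in\Omega^e(\tau,x\oplus1)$ for all $1\le x\le k$. Languages over $E(n,m,2)$: for $1\le j\le k$, $Constrain_k(j)$ is the set of sequences whose subsequence of write events to location $j$ (events $e$ with $op(e)=W$, $loc(e)=j$) has data-value sequence in $0^*\cup 0^*1\,2^*$ (i.e. it is accepted by the automaton with states $a$ (initial) and $b$, both accepting, that ignores all other events, loops on $a$ for data $0$, goes $a\to b$ on data $1$, loops on $b$ for data $2$, and has no other transitions). For $k<j\le m$, $Constrain_k(j)$ is the set of sequences in which every write event to location $j$ has data value $0$. For $1\le i\le k$, $Check_k(i)$ is the set of sequences $\tau$ over $E(n,m,2)$ having positions $x<y$ such that $proc(\tau(x))=i$, $loc(\tau(x))=i$, $data(\tau(x))\in\{1,2\}$, and $proc(\tau(y))=i$, $loc(\tau(y))=i\oplus1$, and either $data(\tau(y))=0$ or ($op(\tau(y))=W$ and $data(\tau(y))=1$). *)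

From mathcomp Require Import all_boot.
Set Implicit Arguments. Unset Strict Implicit. Unset Printing Implicit Defensive.

Inductive opk := Rd | Wr.
Definition isW (o : opk) : bool := if o is Wr then true else false.

Record event := Ev { op : opk; proc : nat; loc : nat; data : nat }.
Definition ev0 := Ev Rd 0 0 0.

Definition inE (n m v : nat) (e : event) : bool :=
  [&& 1 <= proc e <= n, 1 <= loc e <= m & data e <= v].

Definition regular_on (A : Type) (alph : pred A) (L : seq A -> Prop) : Prop :=
  exists (Q : finType) (q0 : Q) (delta : Q -> A -> Q) (F : pred Q),
    forall r, L r <-> (all alph r /\ F (foldl delta q0 r)).

(* letters of E^a(n,m,v) = E(n,m,v) + internal events (a finite type) *)
Definition letter_ok (n m v : nat) (I : Type) (l : event + I) : bool :=
  match l with inl e => inE n m v e | inr _ => true end.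

Record memsys := MemSys {
  ialph : nat -> nat -> nat -> finType;
  runs : forall n m v, seq (event + ialph n m v) -> Prop;
  runs_regular : forall n m v, 1 <= n -> 1 <= m -> 1 <= v ->
    regular_on (@letter_ok n m v (ialph n m v)) (@runs n m v)
}.

Definition trace (I : Type) (r : seq (event + I)) : seq event :=
  pmap (fun l => match l with inl e => Some e | inr _ => None end) r.

Definition is_trace (S : memsys) (n m v : nat) (tau : seq event) : Prop :=
  exists r, @runs S n m v r /\ trace r = tau.

Definition is_trace_nm (S : memsys) (n m : nat) (tau : seq event) : Prop :=
  exists v, 1 <= v /\ is_trace S n m v tau.

(* ---------- positions (0-based: x < size tau) ---------- *)
Definition at_ (tau : seq event) (x : nat) : event := nth ev0 tau x.

Definition inP (tau : seq event) (i x : nat) : Prop :=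
  x < size tau /\ proc (at_ tau x) = i.
Definition inL (tau : seq event) (j x : nat) : Prop :=
  x < size tau /\ loc (at_ tau x) = j.
Definition inLw (tau : seq event) (j x : nat) : Prop :=
  inL tau j x /\ op (at_ tau x) = Wr.
Definition inLr (tau : seq event) (j x : nat) : Prop :=
  inL tau j x /\ op (at_ tau x) = Rd.
Definition Mrel (tau : seq event) (i u v : nat) : Prop :=
  inP tau i u /\ inP tau i v /\ u < v.

Definition unambiguous (tau : seq event) : Prop :=
  forall j x, inLw tau j x ->
    data (at_ tau x) <> 0 /\
    (forall y, inLw tau j y -> y <> x -> data (at_ tau x) <> data (at_ tau y)).

Definition causality (S : memsys) : Prop :=
  forall n m v, 1 <= n -> 1 <= m -> 1 <= v ->
  forall tau, is_trace S n m v tau ->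
  forall j x, inLr tau j x ->
    data (at_ tau x) = 0 \/
    exists y, inLw tau j y /\ data (at_ tau y) = data (at_ tau x).

Definition rename (lam : nat -> nat -> nat) (e : event) : event :=
  Ev (op e) (proc e) (loc e) (lam (loc e) (data e)).

Definition data_independence (S : memsys) : Prop :=
  forall n m v, 1 <= n -> 1 <= m -> 1 <= v ->
  forall tau, all (inE n m v) tau ->
    (is_trace S n m v tau <->
     exists (tau' : seq event) (lam : nat -> nat -> nat),
       unambiguous tau' /\ is_trace_nm S n m tau' /\
       (forall j, lam j 0 = 0) /\ (forall j d, lam j d <= v) /\
       tau = map (rename lam) tau').

Definition Omega (tau : seq event) (j x y : nat) : Prop :=
  inLw tau j x /\ inLw tau j y /\ x < y.

Definition OmegaE (tau : seq event) (j x y : nat) : Prop :=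
  inL tau j x /\ inL tau j y /\
  let dx := data (at_ tau x) in let dy := data (at_ tau y) in
  [\/ (dx = dy /\ op (at_ tau x) = Wr /\ op (at_ tau y) = Rd),
      (dx = 0 /\ dy <> 0)
    | exists a b, Omega tau j a b /\ data (at_ tau a) = dx /\ data (at_ tau b) = dy].

Definition succk (k x : nat) : nat := if x < k then x.+1 else 1.

Definition has_canonical_nice_cycle (k : nat) (tau : seq event) : Prop :=
  exists u v : nat -> nat,
    (forall x y, 1 <= x <= k -> 1 <= y <= k ->
       u x <> v y /\ (x <> y -> u x <> u y /\ v x <> v y)) /\
    (forall x, 1 <= x <= k ->
       Mrel tau x (u x) (v x) /\ OmegaE tau (succk k x) (v x) (u (succk k x))).

Definition write_data (j : nat) (tau : seq event) : seq nat :=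
  [seq data e | e <- tau & isW (op e) && (loc e == j)].

Definition Constrain (k j : nat) (tau : seq event) : Prop :=
  if j <= k then
    exists a b, write_data j tau = nseq a 0 \/
                write_data j tau = nseq a 0 ++ 1 :: nseq b 2
  else all (fun d => d == 0) (write_data j tau).

Definition Check (k i : nat) (tau : seq event) : Prop :=
  exists x y, x < y /\ y < size tau /\
    proc (at_ tau x) = i /\ loc (at_ tau x) = i /\
    (data (at_ tau x) = 1 \/ data (at_ tau x) = 2) /\
    proc (at_ tau y) = i /\ loc (at_ tau y) = succk k i /\
    (data (at_ tau y) = 0 \/ (op (at_ tau y) = Wr /\ data (at_ tau y) = 1)).

From Pilot Require Import Defs.
From mathcomp Require Import all_boot zify.
Set Implicit Arguments. Unset Strict Implicit. Unset Printing Implicit Defensive.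

(* Rename data values to {0,1,2} so that a canonical k-nice cycle u_1 v_1 ... u_k v_k
   becomes visible to the automata Constrain and Check.  For a location j <= k let w_j be
   the write whose value u_j carries; writes to j before w_j are renamed 0, w_j itself 1
   and later writes 2, and every value at a location beyond k is renamed 0.  Then the
   writes to j read 0* 1 2*, u_j reads or writes 1, and the Omega^e edge v_(j-1) -> u_j
   says exactly that v_(j-1) carries 0 or is the write w_j: this is Check.  Data
   Independence makes the renamed trace a trace of S(n,m,2); conversely it pulls a trace
   satisfying Constrain and Check back to an unambiguous trace, in which the order
   0 < 1 < 2 of the renamed writes to j recovers the edges. *)

Lemma fin_choice (T : Type) (x0 : T) (k : nat) (P : nat -> T -> Prop) :
  (forall i, 1 <= i <= k -> exists x, P i x) ->
  exists f : nat -> T, forall i, 1 <= i <= k -> P i (f i).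
Proof.
elim: k => [|k IH] hP; first by exists (fun=> x0) => i; lia.
have [f hf] : exists f : nat -> T, forall i, 1 <= i <= k -> P i (f i).
  by apply: IH => i hi; apply: hP; lia.
have [x hx] := hP k.+1 (leqnn _).
exists (fun i => if i == k.+1 then x else f i) => i hi.
by case: eqP => [-> // | hne]; apply: hf; lia.
Qed.

Lemma pairwise_filter_nth (T : Type) (x0 : T) (r : rel T) (P : pred T) (s : seq T) p q :
  pairwise r (filter P s) -> p < q < size s -> P (nth x0 s p) -> P (nth x0 s q) ->
  r (nth x0 s p) (nth x0 s q).
Proof.
elim: s p q => [|x s IH] [|p] [|q] //=; rewrite ?ltn0 ?andbF //.
  move=> + hq Px Pq; rewrite Px pairwise_cons all_filter => /andP[/(all_nthP x0) hall _].
  exact: implyP (hall q hq) Pq.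
move=> hpw hpq Pp Pq; apply: IH => //.
by case: (P x) hpw => //= /andP[].
Qed.

Definition cmp3 (p q : nat) : nat := if p < q then 0 else if p == q then 1 else 2.

Lemma filter_cmp3_shape (T : Type) (x0 : T) (P : pred T) (g : T -> nat) (s : seq T) q :
  q < size s -> P (nth x0 s q) ->
  (forall p, p < size s -> P (nth x0 s p) -> g (nth x0 s p) = cmp3 p q) ->
  exists a b, map g (filter P s) = nseq a 0 ++ 1 :: nseq b 2.
Proof.
move=> hq Pq hg.
rewrite -(cat_take_drop q s) (drop_nth x0 hq) filter_cat /= Pq map_cat /=.
set l1 := map g _; set l2 := map g _.
exists (size l1), (size l2).
have /all_pred1P <- : all (pred1 0) l1.
  rewrite all_map all_filter; apply/(all_nthP x0) => p; rewrite size_take hq => hp /=.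
  by apply/implyP; rewrite nth_take // => Pp; rewrite hg ?(ltn_trans hp) // /cmp3 hp.
have /all_pred1P <- : all (pred1 2) l2.
  rewrite all_map all_filter; apply/(all_nthP x0) => p; rewrite size_drop => hp /=.
  apply/implyP; rewrite nth_drop => Pp.
  have hp' : q.+1 + p < size s by lia.
  by rewrite hg // /cmp3 ifN ?ifN //; lia.
by rewrite hg // /cmp3 ltnn eqxx.
Qed.

(* [<=] on {0,1,2} except that 1 is unrelated to itself: the sorted sequences are
   exactly those of the shapes 0* and 0* 1 2* allowed by Constrain. *)
Definition step_rel (a b : nat) : bool := (a < b) || (a == b) && (a != 1).

Lemma step_rel_trans : transitive step_rel.
Proof. move=> b a c; rewrite /step_rel; lia. Qed.

Lemma Constrain_sorted k j tau : j <= k -> Constrain k j tau -> sorted step_rel (write_data j tau).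
Proof.
rewrite /Constrain => ->; case=> a [b].
have twos c : path step_rel 2 (nseq c 2) by elim: c => //= c ->.
have one : path step_rel 1 (nseq b 2) by case: b => //= b; rewrite twos.
have zeros c s : path step_rel 0 s -> path step_rel 0 (nseq c 0 ++ s) by elim: c => //= c ->.
case: a => [|a] [->|->] //=; first by have := zeros a [::] isT; rewrite cats0.
exact: zeros.
Qed.

Lemma is_trace_all_inE (S : memsys) n m v tau : 1 <= n -> 1 <= m -> 1 <= v ->
  is_trace S n m v tau -> all (Defs.inE n m v) tau.
Proof.
move=> hn hm hv [r [hr <-]].
have [Q [q0 [delta [F hreg]]]] := runs_regular S hn hm hv.
have [+ _] := (hreg r).1 hr.
by elim: r {hr} => //= -[e|i] r IH /andP[he /IH h] //=; rewrite h andbT.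
Qed.

Definition causal_trace (tau : seq event) : Prop :=
  forall j x, inLr tau j x ->
    data (at_ tau x) = 0 \/ exists y, inLw tau j y /\ data (at_ tau y) = data (at_ tau x).

Lemma write_of_value tau j x : causal_trace tau -> inL tau j x -> data (at_ tau x) <> 0 ->
  exists w, inLw tau j w /\ data (at_ tau w) = data (at_ tau x).
Proof.
move=> hc hx hd; case hop: (op (at_ tau x)); last by exists x.
by case: (hc j x (conj hx hop)).
Qed.

Definition is_write_to (j : nat) (e : event) : bool := isW (op e) && (loc e == j).

Lemma inLwP tau j p : inLw tau j p <-> p < size tau /\ is_write_to j (at_ tau p).
Proof.
rewrite /inLw /inL /is_write_to; case: (op _) => /=.
  by split=> [[_ //] | [_ //]].
by split=> [[[-> /eqP ->]] | [-> /eqP]].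
Qed.

Lemma at_rename lam tau x : x < size tau ->
  at_ (map (rename lam) tau) x = rename lam (at_ tau x).
Proof. exact: nth_map. Qed.

Lemma write_data_rename lam j tau :
  write_data j (map (rename lam) tau) = map (fun e => lam j (data e)) (filter (is_write_to j) tau).
Proof.
rewrite /write_data /is_write_to; elim: tau => //= e tau IH.
by case: ifP => [/andP[_ /eqP hl] | _] /=; rewrite IH ?hl.
Qed.

Lemma is_trace_rename (S : memsys) n m v lam tau : data_independence S ->
  1 <= n -> 1 <= m -> 1 <= v -> unambiguous tau -> is_trace_nm S n m tau ->
  (forall j, lam j 0 = 0) -> (forall j d, lam j d <= v) ->
  is_trace S n m v (map (rename lam) tau).
Proof.
move=> hDI hn hm hv hU [v0 [hv0 htr]] hl0 hlv.
apply/(hDI n m v hn hm hv); last by exists tau, lam; do !split => //; exists v0.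
rewrite all_map; apply: sub_all (is_trace_all_inE hn hm hv0 htr) => e /and3P[hp hl _].
by rewrite /Defs.inE /= hp hl hlv.
Qed.

Definition predk (k j : nat) : nat := if j == 1 then k else j.-1.

Lemma succk_range k i : 1 <= i <= k -> 1 <= succk k i <= k.
Proof. rewrite /succk; case: ifP; lia. Qed.

Lemma predk_range k j : 1 <= j <= k -> 1 <= predk k j <= k.
Proof. rewrite /predk; case: eqP; lia. Qed.

Lemma succkK k j : 1 <= j <= k -> succk k (predk k j) = j.
Proof. rewrite /predk /succk; case: eqP => ?; case: ifP; lia. Qed.

Lemma predkK k i : 1 <= i <= k -> predk k (succk k i) = i.
Proof.
move=> hi; rewrite /succk /predk; case: ltnP => hik /=; last by lia.
by rewrite ifN //; lia.
Qed.

(* [w] is a write to [j] whose value [u] carries, and [y] relates to [w] as the source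
   of an Omega^e edge [y -> u] must. *)
Definition edge_anchor (tau : seq event) (j y u w : nat) : Prop :=
  [/\ inL tau j y, inL tau j u, inLw tau j w, data (at_ tau w) = data (at_ tau u) &
      [\/ data (at_ tau y) = 0, y = w |
          exists a, [/\ inLw tau j a, a < w & data (at_ tau a) = data (at_ tau y)]]].

Lemma OmegaE_anchor tau j y u : causal_trace tau -> OmegaE tau j y u ->
  exists w, edge_anchor tau j y u w.
Proof.
move=> hc [hy [hu /= [[hd [hWy _]] | [hd0 hdu] | [a [b [[ha [hb hab]] [hda hdb]]]]]]].
- by exists y; split => //; apply: Or32.
- by have [w [hw hdw]] := write_of_value hc hu hdu; exists w; split => //; apply: Or31.
- by exists b; split => //; apply: Or33; exists a.
Qed.

Definition ranks_writes (tau : seq event) (lam : nat -> nat -> nat) (j q : nat) : Prop :=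
  forall p, inLw tau j p -> lam j (data (at_ tau p)) = cmp3 p q.

Lemma ranks_write_data_shape tau lam j q : ranks_writes tau lam j q -> inLw tau j q ->
  exists a b, write_data j (map (rename lam) tau) = nseq a 0 ++ 1 :: nseq b 2.
Proof.
move=> hr /inLwP[hq Wq]; rewrite write_data_rename.
apply: (filter_cmp3_shape (g := fun e => lam j (data e)) hq Wq) => p hp Wp.
exact/hr/inLwP.
Qed.

Definition first_write (tau : seq event) (j d : nat) : nat :=
  find (fun e => is_write_to j e && (data e == d)) tau.

Lemma first_write_at tau j p : unambiguous tau -> inLw tau j p ->
  first_write tau j (data (at_ tau p)) = p.
Proof.
move=> hU hp; have /inLwP[hps Wp] := hp.
pose P e := is_write_to j e && (data e == data (at_ tau p)).
have hfp : find P tau <= p.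
  rewrite leqNgt; apply/negP => /(before_find ev0).
  by rewrite /P /at_ in Wp *; rewrite Wp eqxx.
have hfs : find P tau < size tau := leq_ltn_trans hfp hps.
have /andP[Wf /eqP hdf] := nth_find ev0 (etrans (has_find P tau) hfs).
have hf : inLw tau j (find P tau) by apply/inLwP.
apply/eqP/negPn/negP => /eqP hfp'.
by have := (hU j p hp).2 _ hf hfp'; rewrite /at_ hdf.
Qed.

Definition anchor_renaming (k : nat) (tau : seq event) (w : nat -> nat) (j d : nat) : nat :=
  if (j <= k) && (d != 0) then cmp3 (first_write tau j d) (w j) else 0.

Lemma anchor_renaming_ranks k tau w j : unambiguous tau -> j <= k ->
  ranks_writes tau (anchor_renaming k tau w) j (w j).
Proof.
move=> hU hjk p hp; have [hd0 _] := hU j p hp.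
by rewrite /anchor_renaming hjk; move/eqP: hd0 => -> /=; rewrite first_write_at.
Qed.

Lemma anchor_renaming_le2 k tau w j d : anchor_renaming k tau w j d <= 2.
Proof. by rewrite /anchor_renaming /cmp3; do !case: ifP. Qed.

Definition check_pair (k i : nat) (tau : seq event) (x y : nat) : Prop :=
  x < y /\ y < size tau /\
    proc (at_ tau x) = i /\ loc (at_ tau x) = i /\
    (data (at_ tau x) = 1 \/ data (at_ tau x) = 2) /\
    proc (at_ tau y) = i /\ loc (at_ tau y) = succk k i /\
    (data (at_ tau y) = 0 \/ (op (at_ tau y) = Wr /\ data (at_ tau y) = 1)).

Lemma check_pair_rename k i lam tau x y :
  check_pair k i (map (rename lam) tau) x y <->
  x < y /\ y < size tau /\
    proc (at_ tau x) = i /\ loc (at_ tau x) = i /\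
    (lam i (data (at_ tau x)) = 1 \/ lam i (data (at_ tau x)) = 2) /\
    proc (at_ tau y) = i /\ loc (at_ tau y) = succk k i /\
    (lam (succk k i) (data (at_ tau y)) = 0 \/
     (op (at_ tau y) = Wr /\ lam (succk k i) (data (at_ tau y)) = 1)).
Proof.
rewrite /check_pair size_map; split=> -[hxy [hy]];
  have hx := ltn_trans hxy hy; rewrite !at_rename //= => -[hp [hl [hd [hq [hl' hd']]]]];
  by rewrite ?hl ?hl' in hd hd' *; do !split.
Qed.

Lemma anchored_check_pair k i tau lam wi wj ui vi y z : (forall j, lam j 0 = 0) ->
  ranks_writes tau lam i wi -> ranks_writes tau lam (succk k i) wj ->
  Mrel tau i ui vi -> edge_anchor tau i y ui wi -> edge_anchor tau (succk k i) vi z wj ->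
  check_pair k i (map (rename lam) tau) ui vi.
Proof.
move=> hl0 hri hrj [[_ hpu] [[hvs hpv] huv]] [_ [_ hlu] hwi hdu _] [[_ hlv] _ hwj _ hcase].
apply/check_pair_rename; do !split => //.
  by left; rewrite -hdu hri // /cmp3 ltnn eqxx.
case: hcase => [-> | hvw | [a [ha haw <-]]]; first by left.
  by right; rewrite hvw hrj // /cmp3 ltnn eqxx; case: hwj.
by left; rewrite hrj // /cmp3 haw.
Qed.

Lemma nice_cycle_check_trace (S : memsys) n m k tau :
  causality S -> data_independence S -> 1 <= n -> 1 <= m ->
  unambiguous tau -> is_trace_nm S n m tau -> has_canonical_nice_cycle k tau ->
  exists tau', is_trace S n m 2 tau' /\
                (forall j, 1 <= j <= m -> Constrain k j tau') /\
                (forall i, 1 <= i <= k -> Check k i tau').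
Proof.
move=> hC hDI hn hm hU htr [u [v [_ hcyc]]].
have [v0 [hv0 htr0]] := htr.
have hc : causal_trace tau := hC n m v0 hn hm hv0 tau htr0.
have [W hW] := fin_choice 0 (fun x hx => OmegaE_anchor hc (hcyc x hx).2).
pose w j := W (predk k j).
have hw j : 1 <= j <= k -> edge_anchor tau j (v (predk k j)) (u j) (w j).
  by move=> hj; have := hW _ (predk_range hj); rewrite succkK.
pose lam := anchor_renaming k tau w.
have hl0 j : lam j 0 = 0 by rewrite /lam /anchor_renaming andbF.
have hrank j : 1 <= j <= k -> ranks_writes tau lam j (w j).
  by case/andP=> _; apply: anchor_renaming_ranks.
exists (map (rename lam) tau); split; [|split].
- by apply: is_trace_rename => // j d; apply: anchor_renaming_le2.
- move=> j /andP[hj1 hjm]; rewrite /Constrain; case: ifP => hjk.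
    have hj : 1 <= j <= k by rewrite hj1.
    have [_ _ hwj _ _] := hw j hj.
    by have [a [b ->]] := ranks_write_data_shape (hrank j hj) hwj; exists a, b; right.
  rewrite write_data_rename all_map; apply: sub_all (all_predT _) => e _.
  by rewrite /= /lam /anchor_renaming hjk.
- move=> i hi; exists (u i), (v i); have hj := succk_range hi.
  apply: (anchored_check_pair hl0 (hrank i hi) (hrank _ hj) (hcyc i hi).1 (hw i hi)).
  by rewrite /w predkK //; apply: hW.
Qed.

Section RenamedWrites.
Variables (lam : nat -> nat -> nat) (tau : seq event) (j : nat).
Hypothesis sorted_writes : sorted step_rel (write_data j (map (rename lam) tau)).

Lemma renamed_writes_step p q : inLw tau j p -> inLw tau j q -> p < q ->
  step_rel (lam j (data (at_ tau p))) (lam j (data (at_ tau q))).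
Proof.
move: sorted_writes; rewrite write_data_rename sorted_pairwise; last exact: step_rel_trans.
rewrite pairwise_map => hpw /inLwP[_ Wp] /inLwP[hq Wq] hpq.
have hpqs : p < q < size tau by rewrite hpq.
exact (pairwise_filter_nth hpw hpqs Wp Wq).
Qed.

Lemma renamed_writes_lt p q : inLw tau j p -> inLw tau j q ->
  lam j (data (at_ tau p)) < lam j (data (at_ tau q)) -> p < q.
Proof.
move=> hp hq hlt; case: (ltngtP p q) => // [hqp | hpq]; last by move: hlt; rewrite hpq ltnn.
by have := renamed_writes_step hq hp hqp; rewrite /step_rel; lia.
Qed.

Lemma renamed_write1_unique p q : inLw tau j p -> inLw tau j q ->
  lam j (data (at_ tau p)) = 1 -> lam j (data (at_ tau q)) = 1 -> p = q.
Proof.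
move=> hp hq hlp hlq; case: (ltngtP p q) => // hpq.
  by have := renamed_writes_step hp hq hpq; rewrite hlp hlq.
by have := renamed_writes_step hq hp hpq; rewrite hlp hlq.
Qed.

End RenamedWrites.

Lemma check_edge_OmegaE lam tau j y u :
  unambiguous tau -> causal_trace tau -> lam j 0 = 0 ->
  sorted step_rel (write_data j (map (rename lam) tau)) ->
  inL tau j y -> inL tau j u -> y <> u ->
  lam j (data (at_ tau u)) = 1 \/ lam j (data (at_ tau u)) = 2 ->
  lam j (data (at_ tau y)) = 0 \/ op (at_ tau y) = Wr /\ lam j (data (at_ tau y)) = 1 ->
  OmegaE tau j y u.
Proof.
move=> hU hc hl0 hs hy hu hyu hlu hly; split=> //; split=> //=.
have hu0 : data (at_ tau u) <> 0 by move=> hd; rewrite hd hl0 in hlu; case: hlu.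
have [b [hb hdb]] := write_of_value hc hu hu0.
case: (data (at_ tau y) =P 0) => hy0; first by apply: Or32.
case: hly => [hly | [Wy hly]].
  have [a [ha hda]] := write_of_value hc hy hy0.
  apply: Or33; exists a, b; do !split => //.
  by apply: (renamed_writes_lt hs ha hb); rewrite hda hdb hly; case: hlu => ->.
have hwy : inLw tau j y by [].
case: hlu => hlu.
  have hyb : y = b by apply: (renamed_write1_unique hs hwy hb) => //; rewrite hdb.
  case hopu: (op (at_ tau u)); first by apply: Or31; rewrite -hdb -hyb.
  (* a write [u] would be a second write of the value of [y] *)
  by have := (hU j y hwy).2 u (conj hu hopu) (nesym hyu); rewrite hyb hdb.
apply: Or33; exists y, b; do !split => //.
by apply: (renamed_writes_lt hs hwy hb); rewrite hdb hly hlu.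
Qed.

Lemma Mrel_distinct tau k (u v : nat -> nat) :
  (forall i, 1 <= i <= k -> Mrel tau i (u i) (v i)) ->
  forall x y, 1 <= x <= k -> 1 <= y <= k ->
    u x <> v y /\ (x <> y -> u x <> u y /\ v x <> v y).
Proof.
move=> hM x y hx hy.
have [[_ hpux] [[_ hpvx] huvx]] := hM x hx.
have [[_ hpuy] [[_ hpvy] _]] := hM y hy.
split=> [e | hxy].
  have exy : x = y by rewrite -hpux e hpvy.
  by move: huvx; rewrite e exy ltnn.
by split=> e; apply: hxy; [rewrite -hpux e hpuy | rewrite -hpvx e hpvy].
Qed.

Lemma check_trace_nice_cycle (S : memsys) n m k tau' :
  causality S -> data_independence S -> 1 <= n -> 1 <= m -> k <= m ->
  is_trace S n m 2 tau' -> (forall j, 1 <= j <= m -> Constrain k j tau') ->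
  (forall i, 1 <= i <= k -> Check k i tau') ->
  exists tau, unambiguous tau /\ is_trace_nm S n m tau /\ has_canonical_nice_cycle k tau.
Proof.
move=> hC hDI hn hm hkm htr' hCon hChk.
have [tau [lam [hU [htr [hl0 [_ def_tau']]]]]] :=
  (hDI n m 2 hn hm isT tau' (is_trace_all_inE (v := 2) hn hm isT htr')).1 htr'.
subst tau'; have [v1 [hv1 htr1]] := htr.
have hc : causal_trace tau := hC n m v1 hn hm hv1 tau htr1.
have hpairs i : 1 <= i <= k ->
    exists p : nat * nat, check_pair k i (map (rename lam) tau) p.1 p.2.
  by move=> /hChk[x [y hxy]]; exists (x, y).
have [uv huv] := fin_choice (0, 0) hpairs.
pose u i := (uv i).1; pose v i := (uv i).2.
have hM i : 1 <= i <= k -> Mrel tau i (u i) (v i).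
  move=> /huv/check_pair_rename[huv' [hvs [hpu [_ [_ [hpv _]]]]]].
  by do !split => //; apply: ltn_trans hvs.
exists tau; do 2!split=> //; exists u, v; split; first exact: (Mrel_distinct hM).
move=> x hx; split; first exact: hM.
have hj := succk_range hx.
have /check_pair_rename[huvj [hus [_ [hlu [hdu _]]]]] := huv _ hj.
have /check_pair_rename[_ [hvs [_ [_ [_ [_ [hlv hdv]]]]]]] := huv _ hx.
apply: check_edge_OmegaE => //.
- apply: (Constrain_sorted (k := k)); first by case/andP: hj.
  by apply: hCon; case/andP: hj => -> /leq_trans ->.
- by split => //; apply: ltn_trans huvj hus.
- by move=> e; apply: (Mrel_distinct hM hj hx).1.
Qed.

Theorem theorem8p1 (S : memsys) (hC : causality S) (hDI : data_independence S)
  (n m : nat) (hn : 1 <= n) (hm : 1 <= m) (k : nat) (hk : 1 <= k <= minn n m) :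
  (exists tau, unambiguous tau /\ is_trace_nm S n m tau /\
               has_canonical_nice_cycle k tau) <->
  (exists tau', is_trace S n m 2 tau' /\
                (forall j, 1 <= j <= m -> Constrain k j tau') /\
                (forall i, 1 <= i <= k -> Check k i tau')).
Proof.
have hkm : k <= m by lia.
split=> [[tau [hU [htr hcyc]]] | [tau' [htr [hCon hChk]]]].
  exact: nice_cycle_check_trace hC hDI hn hm hU htr hcyc.
exact: check_trace_nice_cycle hC hDI hn hm hkm htr hCon hChk.
Qed.
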